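(* Let $K\ge 2$ and let $\mathbf{z}_r$ and $\mathrm{OPT}\text{-}\mathbf{Q}^\star$ be as in the context. Let $\lambda_j^\star$ be the $j$-th eigenvalue of $\mathbf{Q}^\star$, with $\lambda_j^\star=0$ if $j>r^\star$. If $r\le r^\star$ and $\mathbf{H}$ is Hermitian, then $$\left|\mathrm{OPT}\text{-}\mathbf{Q}^\star-\mathbf{z}_r^\dagger\mathbf{Q}^\star\mathbf{z}_r\right|\le O\!\left(n\left(\lambda_{r+1}^\star+\|\mathbf{H}\|_2\right)\right).$$
   Context: $\mathcal{A}_K=\{\exp(2\pi\mathrm{i}k/K):k=0,\dots,K-1\}$. $\mathbf{Q}^\star\in\mathbb{C}^{n\times n}$ is Hermitian positive semi-definite of rank $r^\star$ with eigenvalues $\lambda_1^\star\ge\lambda_2^\star\ge\dots$. $\mathbf{H}\in\mathbb{C}^{n\times n}$ and $\mathbf{Q}=\mathbf{Q}^\star+\mathbf{H}$. $\mathbf{Q}_r=\mathbf{V}_r\boldsymbol{\Sigma}_r\mathbf{V}_r^\dagger$ with $\boldsymbol{\Sigma}_r$ the top-$r$ singular values of $\mathbf{Q}$ and $\mathbf{V}_r$ the corresponding left singular vectors. $\mathrm{OPT}\text{-}\mathbf{Q}^\star=\max_{\mathbf{z}\in\mathcal{A}_K^n}\mathbf{z}^\dagger\mathbf{Q}^\star\mathbf{z}$ and $\mathbf{z}_r$ attains $\max_{\mathbf{z}\in\mathcal{A}_K^n}\mathbf{z}^\dagger\mathbf{Q}_r\mathbf{z}$. $\|\cdot\|_2$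 is the spectral norm; $O(\cdot)$ hides an absolute constant. *)

From HB Require Import structures.
From mathcomp Require Import all_boot all_order all_algebra.
From mathcomp Require Import boolp classical_sets reals trigo.
From mathcomp Require Import complex.
Set Implicit Arguments. Unset Strict Implicit. Unset Printing Implicit Defensive.
Import Order.TTheory GRing.Theory Num.Theory.
Local Open Scope ring_scope.
Local Open Scope complex_scope.
Local Open Scope classical_set_scope.

Section Defs.
Variable R : realType.
Local Notation C := R[i].

Definition ctmx m n (A : 'M[C]_(m, n)) : 'M[C]_(n, m) := (map_mx conjc A)^T.

Definition is_hermitian n (A : 'M[C]_n) : Prop := ctmx A = A.

Definition is_unitary n (U : 'M[C]_n) : Prop := ctmx U *m U = 1%:M.

Definition quadf n (A : 'M[C]_n) (z : 'cV[C]_n) : C := (ctmx z *m A *m z) 0 0.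

(* Hermitian positive semi-definite (order on C: x <= y iff y - x is real >= 0) *)
Definition is_psd n (A : 'M[C]_n) : Prop :=
  is_hermitian A /\ forall x : 'cV[C]_n, 0 <= quadf A x.

Definition AK (K : nat) : C -> Prop := fun w =>
  exists k : 'I_K,
    w = (cos (2 * pi * k%:R / K%:R)) +i* (sin (2 * pi * k%:R / K%:R)).

Definition inAKn (K n : nat) (z : 'cV[C]_n) : Prop := forall i, AK K (z i 0).

Definition vnorm n (x : 'cV[C]_n) : R :=
  Num.sqrt (\sum_i (complex.Re (x i 0) ^+ 2 + complex.Im (x i 0) ^+ 2)).

Definition specnorm n (A : 'M[C]_n) : R :=
  sup [set t : R | exists x : 'cV[C]_n, vnorm x = 1 /\ t = vnorm (A *m x)].

(* lam : nat -> R lists the eigenvalues (with multiplicity) of A, 0-indexed, in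
   nonincreasing order, i.e. lam j = lambda_{j+1}; lam j = 0 for j >= n. *)
Definition eigen_seq n (A : 'M[C]_n) (lam : nat -> R) : Prop :=
  char_poly A = \prod_(j < n) ('X - ((lam j)%:C)%:P) /\
  (forall i j, (i <= j < n)%N -> lam j <= lam i) /\
  (forall j, (n <= j)%N -> lam j = 0).

Definition is_svd n (A : 'M[C]_n) (U : 'M[C]_n) (s : 'I_n -> R) (W : 'M[C]_n) : Prop :=
  is_unitary U /\ is_unitary W /\ (forall i, 0 <= s i) /\
  (forall i j : 'I_n, (i <= j)%N -> s j <= s i) /\
  A = U *m diag_mx (\row_i (s i)%:C) *m ctmx W.

(* A_r = V_r Sigma_r V_r^dagger, V_r = first r columns of U (left singular vectors) *)
Definition trunc_svd n (U : 'M[C]_n) (s : 'I_n -> R) (r : nat) : 'M[C]_n :=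
  \sum_(i < n | (i < r)%N) (s i)%:C *: (col i U *m ctmx (col i U)).

End Defs.

(* Write [Q = Qs + H = U diag(s) W^dagger].  As [Q] is Hermitian, [T := U^dagger Q U]
   is a Hermitian square root of [diag(s)^2]; it therefore commutes with [diag(s)] and
   agrees with it on the singular values above [|H|], so [T >= -|H|] bounds the form of
   [diag(s) - T] by [2 |H| |a|^2].  In the basis [U] the form of [Qs] is thus that of
   [diag(s)] up to [O(|H|) |z|^2], while that of [Q_r] drops the [s_i] with [i >= r].
   A Courant-Fischer dimension count (the first [r + 1] left singular vectors meet the
   eigenvectors of [Qs] with eigenvalue at most [lambda_(r+1)]) gives
   [s_i <= 2 (lambda_(r+1) + |H|)] for [i >= r].  So on [A_K^n], where [|z|^2 = n], the
   two forms differ by [O(n (lambda_(r+1) + |H|))] uniformly, and comparing the two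
   maximisers yields the bound with constant [10]. *)

From mathcomp Require Import all_boot all_order all_algebra.
From mathcomp Require Import classical_sets reals trigo complex.
From mathcomp Require Import sesquilinear spectral.
From mathcomp Require Import ring lra zify.

Set Implicit Arguments. Unset Strict Implicit. Unset Printing Implicit Defensive.
Import Order.TTheory GRing.Theory Num.Theory.
Local Open Scope ring_scope.
Local Open Scope complex_scope.

Lemma char_poly_similar (F : comUnitRingType) n (P A : 'M[F]_n) :
  P \in unitmx -> char_poly (invmx P *m A *m P) = char_poly A.
Proof.
move=> Pu; rewrite /char_poly /char_poly_mx.
set Pp := map_mx polyC P; set Pi := map_mx polyC (invmx P).
have PiP : Pi *m Pp = 1%:M by rewrite -map_mxM mulVmx // map_mx1.
have -> : map_mx polyC (invmx P *m A *m P) = Pi *m map_mx polyC A *m Pp.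
  by rewrite !map_mxM.
have XE : ('X%:M : 'M[{poly F}]_n) = Pi *m 'X%:M *m Pp.
  by rewrite scalar_mxC -mulmxA PiP mulmx1.
by rewrite [in LHS]XE -mulmxBl -mulmxBr !det_mulmx mulrAC -det_mulmx PiP det1 mul1r.
Qed.

Lemma card_ord_lt n r : (r <= n)%N -> #|[set i : 'I_n | (i < r)%N]| = r.
Proof.
move=> rn; have -> : [set i : 'I_n | (i < r)%N] = [set widen_ord rn j | j : 'I_r].
  apply/setP => i; rewrite inE; apply/idP/imsetP => [ir | [j _ ->]] /=; last exact: ltn_ord.
  by exists (Ordinal ir) => //; apply: val_inj.
by rewrite card_imset ?card_ord // => i j /(congr1 val) /= /val_inj.
Qed.

Lemma exists_nz_capmx (F : fieldType) m1 m2 n (A : 'M[F]_(m1, n)) (B : 'M[F]_(m2, n)) :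
  (n < \rank A + \rank B)%N ->
  exists v : 'rV[F]_n, [/\ v != 0, (v <= A)%MS & (v <= B)%MS].
Proof.
move=> rkAB; have cap_gt0 : (0 < \rank (A :&: B)%MS)%N.
  by have := mxrank_sum_cap A B; have := rank_leq_col (A + B)%MS; lia.
exists (nz_row (A :&: B)%MS); split.
- by rewrite nz_row_eq0 -mxrank_eq0 -lt0n.
- exact: submx_trans (nz_row_sub _) (capmxSl _ _).
- exact: submx_trans (nz_row_sub _) (capmxSr _ _).
Qed.

Section HermitianForms.
Variable R : realType.
Local Notation C := R[i].
Local Notation Re := (@complex.Re R).
Local Notation Im := (@complex.Im R).
Implicit Types (c : C) (m n : nat).

Definition sqnormc c : R := Re c ^+ 2 + Im c ^+ 2.
Definition sqnorm n (x : 'cV[C]_n) : R := \sum_i sqnormc (x i 0).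
Definition cdot n (x y : 'cV[C]_n) : C := (ctmx x *m y) 0 0.
Definition dmx n (e : 'I_n -> R) : 'M[C]_n := diag_mx (\row_i (e i)%:C).

Lemma ReJ c : Re (conjc c) = Re c. Proof. by case: c. Qed.

Lemma Re_realM (t : R) c : Re (t%:C * c) = t * Re c.
Proof. by case: c => a b; rewrite /= mul0r subr0. Qed.

Lemma sqnormc_ge0 c : 0 <= sqnormc c.
Proof. by rewrite addr_ge0 ?sqr_ge0. Qed.

Lemma sqnormc_eq0 c : (sqnormc c == 0) = (c == 0).
Proof.
case: c => a b; rewrite /sqnormc /= paddr_eq0 ?sqr_ge0 // !sqrf_eq0.
by rewrite eq_complex.
Qed.

Lemma sqnormc0 : sqnormc 0 = 0.
Proof. by apply/eqP; rewrite sqnormc_eq0. Qed.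

Lemma mulJc c : conjc c * c = (sqnormc c)%:C.
Proof.
case: c => a b; rewrite /sqnormc /= /GRing.mul /= /mulc /=.
by apply/eqP; rewrite eq_complex /=; apply/andP; split; apply/eqP; ring.
Qed.

Lemma sqnormcM c1 c2 : sqnormc (c1 * c2) = sqnormc c1 * sqnormc c2.
Proof. by case: c1 => a1 b1; case: c2 => a2 b2; rewrite /sqnormc /=; ring. Qed.

Lemma sqnormcJ c : sqnormc (conjc c) = sqnormc c.
Proof. by case: c => a b; rewrite /sqnormc /=; ring. Qed.

Lemma Re_le_sqrt_sqnormc c : `|Re c| <= Num.sqrt (sqnormc c).
Proof. by rewrite -sqrtr_sqr ler_sqrt ?sqnormc_ge0 // lerDl sqr_ge0. Qed.

Lemma sqnorm_ge0 n (x : 'cV[C]_n) : 0 <= sqnorm x.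
Proof. by apply: sumr_ge0 => i _; apply: sqnormc_ge0. Qed.

Lemma sqnorm_eq0 n (x : 'cV[C]_n) : (sqnorm x == 0) = (x == 0).
Proof.
apply/idP/eqP => [|->]; last by rewrite /sqnorm big1 // => i _; rewrite mxE sqnormc0.
rewrite psumr_eq0 => [/allP x0 | i _]; last exact: sqnormc_ge0.
apply/matrixP => i j; rewrite ord1 mxE; apply/eqP; rewrite -sqnormc_eq0.
exact: x0 (mem_index_enum _).
Qed.

Lemma sqnormc_le_sqnorm n (x : 'cV[C]_n) i : sqnormc (x i 0) <= sqnorm x.
Proof.
by rewrite /sqnorm (bigD1 i) //= lerDl sumr_ge0 // => j _; apply: sqnormc_ge0.
Qed.

Lemma ctmxK m n (A : 'M[C]_(m, n)) : ctmx (ctmx A) = A.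
Proof. by apply/matrixP => i j; rewrite !mxE conjcK. Qed.

Lemma ctmxM m n p (A : 'M[C]_(m, n)) (B : 'M[C]_(n, p)) :
  ctmx (A *m B) = ctmx B *m ctmx A.
Proof.
apply/matrixP => i j; rewrite !mxE rmorph_sum; apply: eq_bigr => k _.
by rewrite !mxE rmorphM mulrC.
Qed.

Lemma ctmxD m n (A B : 'M[C]_(m, n)) : ctmx (A + B) = ctmx A + ctmx B.
Proof. by apply/matrixP => i j; rewrite !mxE rmorphD. Qed.

Lemma ctmxB m n (A B : 'M[C]_(m, n)) : ctmx (A - B) = ctmx A - ctmx B.
Proof. by apply/matrixP => i j; rewrite !mxE rmorphB. Qed.

Lemma ctmx_dmx n (e : 'I_n -> R) : ctmx (dmx e) = dmx e.
Proof.
rewrite /dmx; apply/matrixP => i j; rewrite !mxE rmorphMn /= eq_sym.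
by case: eqP => [->|_] //=; rewrite oppr0.
Qed.

Lemma unitary_mulmxV n (U : 'M[C]_n) : is_unitary U -> U *m ctmx U = 1%:M.
Proof. exact: mulmx1C. Qed.

Lemma cdotE n (x y : 'cV[C]_n) : cdot x y = \sum_i conjc (x i 0) * y i 0.
Proof. by rewrite /cdot !mxE; apply: eq_bigr => i _; rewrite !mxE. Qed.

Lemma cdot_mulmxl m n (A : 'M[C]_(m, n)) x y : cdot (A *m x) y = cdot x (ctmx A *m y).
Proof. by rewrite /cdot ctmxM mulmxA. Qed.

Lemma cdot_conj n (x y : 'cV[C]_n) : conjc (cdot x y) = cdot y x.
Proof.
by rewrite !cdotE rmorph_sum; apply: eq_bigr => i _; rewrite rmorphM /= conjcK mulrC.
Qed.

Lemma cdotDl n (x y z : 'cV[C]_n) : cdot (x + y) z = cdot x z + cdot y z.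
Proof. by rewrite /cdot ctmxD mulmxDl mxE. Qed.

Lemma cdotDr n (x y z : 'cV[C]_n) : cdot x (y + z) = cdot x y + cdot x z.
Proof. by rewrite /cdot mulmxDr mxE. Qed.

Lemma cdotBl n (x y z : 'cV[C]_n) : cdot (x - y) z = cdot x z - cdot y z.
Proof. by rewrite /cdot ctmxB mulmxBl !mxE. Qed.

Lemma cdotBr n (x y z : 'cV[C]_n) : cdot x (y - z) = cdot x y - cdot x z.
Proof. by rewrite /cdot mulmxBr !mxE. Qed.

Lemma cdot0l n (x : 'cV[C]_n) : cdot 0 x = 0.
Proof. by rewrite cdotE big1 // => i _; rewrite mxE conjc0 mul0r. Qed.

Lemma cdot0r n (x : 'cV[C]_n) : cdot x 0 = 0.
Proof. by rewrite /cdot mulmx0 mxE. Qed.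

Lemma cdotZl n (t : R) (x y : 'cV[C]_n) : cdot (t%:C *: x) y = t%:C * cdot x y.
Proof.
rewrite !cdotE mulr_sumr; apply: eq_bigr => i _.
by rewrite mxE rmorphM /= oppr0 mulrA.
Qed.

Lemma cdotZr n (t : R) (x y : 'cV[C]_n) : cdot x (t%:C *: y) = t%:C * cdot x y.
Proof. by rewrite /cdot -scalemxAr mxE. Qed.

Lemma Re_cdotC n (x y : 'cV[C]_n) : Re (cdot y x) = Re (cdot x y).
Proof. by rewrite -cdot_conj ReJ. Qed.

Lemma cdotxx n (x : 'cV[C]_n) : cdot x x = (sqnorm x)%:C.
Proof. by rewrite cdotE rmorph_sum; apply: eq_bigr => i _; apply: mulJc. Qed.

Lemma sqnormE n (x : 'cV[C]_n) : sqnorm x = Re (cdot x x).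
Proof. by rewrite cdotxx. Qed.

Lemma sqnormD n (x y : 'cV[C]_n) :
  sqnorm (x + y) = sqnorm x + sqnorm y + 2 * Re (cdot x y).
Proof. by rewrite !sqnormE cdotDl !cdotDr !raddfD /= (Re_cdotC x y); ring. Qed.

Lemma sqnormB n (x y : 'cV[C]_n) :
  sqnorm (x - y) = sqnorm x + sqnorm y - 2 * Re (cdot x y).
Proof. by rewrite !sqnormE cdotBl !cdotBr !raddfB /= (Re_cdotC x y); ring. Qed.

Lemma sqnormD_le n (x y : 'cV[C]_n) : sqnorm (x + y) <= 2 * sqnorm x + 2 * sqnorm y.
Proof. by have := sqnorm_ge0 (x - y); rewrite sqnormB sqnormD; lra. Qed.

Lemma sqnormZ n (t : R) (x : 'cV[C]_n) : sqnorm (t%:C *: x) = t ^+ 2 * sqnorm x.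
Proof. by rewrite !sqnormE cdotZl cdotZr mulrA -rmorphM Re_realM expr2. Qed.

Lemma sqnorm_unitary n (U : 'M[C]_n) x : is_unitary U -> sqnorm (U *m x) = sqnorm x.
Proof. by move=> Uu; rewrite !sqnormE cdot_mulmxl mulmxA Uu mul1mx. Qed.

Lemma sqnorm_unitaryV n (U : 'M[C]_n) x : is_unitary U -> sqnorm (ctmx U *m x) = sqnorm x.
Proof.
by move=> Uu; rewrite !sqnormE cdot_mulmxl ctmxK mulmxA unitary_mulmxV // mul1mx.
Qed.

(* A weak Cauchy-Schwarz inequality, from [0 <= |b x -+ y|^2]. *)
Lemma Re_cdot_le n (x y : 'cV[C]_n) (b : R) :
  0 <= b -> sqnorm y <= b ^+ 2 * sqnorm x -> `|Re (cdot x y)| <= b * sqnorm x.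
Proof.
move=> b_ge0 yb; have x_ge0 := sqnorm_ge0 x.
have [b0 | b_neq0] := eqVneq b 0.
  have : sqnorm y == 0 by rewrite eq_le sqnorm_ge0 andbT; move: yb; rewrite b0 expr2 !mul0r.
  by rewrite sqnorm_eq0 => /eqP ->; rewrite cdot0r normr0 mulr_ge0.
have b_gt0 : 0 < b by rewrite lt_def b_neq0.
have := sqnorm_ge0 (b%:C *: x - y); rewrite sqnormB sqnormZ cdotZl Re_realM.
have := sqnorm_ge0 (b%:C *: x + y); rewrite sqnormD sqnormZ cdotZl Re_realM.
by move=> hD hB; rewrite ler_norml; apply/andP; split; nra.
Qed.

Lemma quadfE n (A : 'M[C]_n) z : quadf A z = cdot z (A *m z).
Proof. by rewrite /quadf /cdot mulmxA. Qed.

Lemma quadf_hermitian n (A : 'M[C]_n) z : is_hermitian A -> quadf A z = (Re (quadf A z))%:C.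
Proof.
move=> hA; have : conjc (quadf A z) = quadf A z.
  by rewrite quadfE cdot_conj cdot_mulmxl hA.
case: (quadf A z) => a b /eqP; rewrite eq_complex /= => /andP[_ /eqP bN].
by have -> : b = 0 by lra.
Qed.

(** * Diagonal matrices with real entries *)

Lemma dmxE n (e : 'I_n -> R) i j : dmx e i j = (e i)%:C *+ (i == j).
Proof. by rewrite !mxE. Qed.

Lemma mul_dmx_mx n p (e : 'I_n -> R) (A : 'M[C]_(n, p)) i j :
  (dmx e *m A) i j = (e i)%:C * A i j.
Proof. by rewrite mul_diag_mx !mxE. Qed.

Lemma mul_mx_dmx m n (e : 'I_n -> R) (A : 'M[C]_(m, n)) i j :
  (A *m dmx e) i j = A i j * (e j)%:C.
Proof. by rewrite mul_mx_diag !mxE. Qed.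

Lemma dmxM n (e f : 'I_n -> R) : dmx e *m dmx f = dmx (fun i => e i * f i).
Proof.
apply/matrixP => i j; rewrite mul_dmx_mx !dmxE rmorphM /=.
by case: (i == j); rewrite ?mulr0n ?mulr0.
Qed.

Lemma dmxB n (e f : 'I_n -> R) : dmx e - dmx f = dmx (fun i => e i - f i).
Proof.
apply/matrixP => i j; rewrite !mxE rmorphB /=.
by case: (i == j); rewrite ?mulr0n ?subr0.
Qed.

Lemma Re_cdot_dmx n (e : 'I_n -> R) (a : 'cV[C]_n) :
  Re (cdot a (dmx e *m a)) = \sum_i e i * sqnormc (a i 0).
Proof.
rewrite cdotE raddf_sum; apply: eq_bigr => i _.
by rewrite mul_dmx_mx mulrCA mulJc -rmorphM.
Qed.

Lemma Re_cdot_dmx_le n (e : 'I_n -> R) (a : 'cV[C]_n) b :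
  (forall i, a i 0 != 0 -> e i <= b) -> Re (cdot a (dmx e *m a)) <= b * sqnorm a.
Proof.
move=> e_le; rewrite Re_cdot_dmx mulr_sumr; apply: ler_sum => i _.
have [-> | ai] := eqVneq (a i 0) 0; first by rewrite sqnormc0 !mulr0.
by rewrite ler_wpM2r ?sqnormc_ge0 ?e_le.
Qed.

Lemma Re_cdot_dmx_ge n (e : 'I_n -> R) (a : 'cV[C]_n) b :
  (forall i, a i 0 != 0 -> b <= e i) -> b * sqnorm a <= Re (cdot a (dmx e *m a)).
Proof.
move=> e_ge; rewrite Re_cdot_dmx mulr_sumr; apply: ler_sum => i _.
have [-> | ai] := eqVneq (a i 0) 0; first by rewrite sqnormc0 !mulr0.
by rewrite ler_wpM2r ?sqnormc_ge0 ?e_ge.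
Qed.

Lemma dmx_definite n (e : 'I_n -> R) (w : 'cV[C]_n) :
  (forall i, w i 0 != 0 -> 0 < e i) -> Re (cdot w (dmx e *m w)) <= 0 -> w = 0.
Proof.
move=> e_gt0 w_le0; apply/matrixP => i j; rewrite ord1 mxE.
apply/eqP/negP => /negP wi.
have rest_ge0 : 0 <= \sum_(k | k != i) e k * sqnormc (w k 0).
  apply: sumr_ge0 => k _; have [-> | wk] := eqVneq (w k 0) 0.
    by rewrite sqnormc0 mulr0.
  by rewrite mulr_ge0 ?sqnormc_ge0 ?ltW ?e_gt0.
have wi_gt0 : 0 < e i * sqnormc (w i 0).
  by rewrite mulr_gt0 ?e_gt0 // lt_def sqnormc_eq0 wi sqnormc_ge0.
by move: w_le0; rewrite Re_cdot_dmx (bigD1 i) //=; lra.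
Qed.

Section AbsoluteValueOfHermitian.
Variables (n : nat) (s : 'I_n -> R) (T : 'M[C]_n).
Hypotheses (s_ge0 : forall i, 0 <= s i) (TT : T *m T = dmx s *m dmx s).

Lemma sqrt_dmx_eq0 i j : s i != s j -> T i j = 0.
Proof.
move=> sij; have /matrixP/(_ i j) : T *m (T *m T) = (T *m T) *m T by rewrite mulmxA.
rewrite TT dmxM mul_mx_dmx mul_dmx_mx [RHS]mulrC => /eqP.
rewrite -subr_eq0 -mulrBr mulf_eq0 -rmorphB => /orP[/eqP // | /eqP /(congr1 Re) /=].
by move=> /eqP; rewrite subr_eq0 -!expr2 eqrXn2 // eq_sym (negPf sij).
Qed.

Lemma sqrt_dmx_comm : T *m dmx s = dmx s *m T.
Proof.
apply/matrixP => i j; rewrite mul_mx_dmx mul_dmx_mx.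
have [-> | sij] := eqVneq (s i) (s j); first by rewrite mulrC.
by rewrite sqrt_dmx_eq0 // mulr0 mul0r.
Qed.

Lemma dmx_add_mul_sub_sqrt : (dmx s + T) *m (dmx s - T) = 0.
Proof.
by rewrite mulmxBr !mulmxDl -sqrt_dmx_comm TT opprD addrA addrK subrr.
Qed.

Variable h : R.
Hypotheses (h_ge0 : 0 <= h) (T_herm : ctmx T = T)
  (T_ge : forall w : 'cV[C]_n, - h * sqnorm w <= Re (cdot w (T *m w))).

(* On the singular values above [h], [T] coincides with [dmx s]: there [dmx s + T]
   is definite, and it annihilates the range of [dmx s - T]. *)
Lemma sqrt_dmx_sub_high (y : 'cV[C]_n) :
  (forall i, y i 0 != 0 -> h < s i) -> (dmx s - T) *m y = 0.
Proof.
move=> y_high; set w := (dmx s - T) *m y.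
have w_high i : w i 0 != 0 -> h < s i.
  move=> wi; rewrite ltNge; apply: contra wi => si_le.
  rewrite /w mxE big1 // => j _; rewrite !mxE.
  have [-> | yj] := eqVneq (y j 0) 0; first by rewrite mulr0.
  have sij : s i != s j.
    by apply: contraTneq si_le => ->; rewrite -ltNge y_high.
  have ij : (i == j) = false by apply: contraNF sij => /eqP ->.
  by rewrite sqrt_dmx_eq0 // ij mulr0n sub0r oppr0 mul0r.
apply: (@dmx_definite _ (fun i => s i - h)) => [i /w_high | ].
  by rewrite subr_gt0.
have Dw : Re (cdot w (dmx s *m w)) + Re (cdot w (T *m w)) = 0.
  by rewrite -raddfD -cdotDr -mulmxDl /w mulmxA dmx_add_mul_sub_sqrt mul0mx cdot0r.
have := T_ge w; move: Dw; rewrite !Re_cdot_dmx.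
have -> : \sum_i (s i - h) * sqnormc (w i 0) = \sum_i s i * sqnormc (w i 0) - h * sqnorm w.
  by rewrite /sqnorm mulr_sumr -sumrB; apply: eq_bigr => i _; ring.
lra.
Qed.

Lemma Re_cdot_sqrt_dmx_gap (a : 'cV[C]_n) :
  `|Re (cdot a ((dmx s - T) *m a))| <= 2 * h * sqnorm a.
Proof.
pose y := \col_i (if h < s i then a i 0 else 0).
pose y' := \col_i (if h < s i then 0 else a i 0).
have a_split : a = y + y'.
  by apply/matrixP => i j; rewrite ord1 !mxE; case: ifP; rewrite ?addr0 ?add0r.
have Dy : (dmx s - T) *m y = 0.
  by apply: sqrt_dmx_sub_high => i; rewrite mxE; case: ifP => // _; rewrite eqxx.
have y'_low i : y' i 0 != 0 -> s i <= h.
  by rewrite mxE leNgt; case: ifP => //; rewrite eqxx.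
have y'_le : sqnorm y' <= sqnorm a.
  apply: ler_sum => i _; rewrite mxE; case: ifP => _ //.
  by rewrite sqnormc0 sqnormc_ge0.
have herm : ctmx (dmx s - T) = dmx s - T by rewrite ctmxB ctmx_dmx T_herm.
have -> : cdot a ((dmx s - T) *m a) = cdot y' (dmx s *m y') - cdot y' (T *m y').
  rewrite {1 2}a_split mulmxDr Dy add0r cdotDl -{1}herm -cdot_mulmxl Dy cdot0l.
  by rewrite add0r mulmxBl cdotBr.
have D_ge : 0 <= Re (cdot y' (dmx s *m y')).
  by rewrite -[X in X <= _](mul0r (sqnorm y')) Re_cdot_dmx_ge.
have D_le : Re (cdot y' (dmx s *m y')) <= h * sqnorm y' by apply: Re_cdot_dmx_le.
have T_le : `|Re (cdot y' (T *m y'))| <= h * sqnorm y'.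
  apply: Re_cdot_le => //.
  rewrite sqnormE cdot_mulmxl T_herm mulmxA TT dmxM; apply: Re_cdot_dmx_le => i yi.
  by rewrite -expr2 ler_sqr ?nnegrE ?s_ge0 ?y'_low.
have hy'_le : h * sqnorm y' <= h * sqnorm a by rewrite ler_wpM2l.
have := sqnorm_ge0 y'; move: T_le; rewrite raddfB /= !ler_norml => /andP[T1 T2] y'_ge0.
by apply/andP; split; nra.
Qed.

End AbsoluteValueOfHermitian.

(** * Spectral decomposition of positive semi-definite matrices *)

Lemma sqnormc_delta n (i k : 'I_n) : sqnormc ((delta_mx i 0 : 'cV[C]_n) k 0) = (k == i)%:R.
Proof.
by rewrite mxE eqxx andbT; case: (k == i); rewrite /sqnormc /= ?expr1n expr0n ?addr0.
Qed.

Lemma sqnorm_delta n (i : 'I_n) : sqnorm (delta_mx i 0 : 'cV[C]_n) = 1.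
Proof.
rewrite /sqnorm (bigD1 i) //= big1 => [|k ki]; first by rewrite sqnormc_delta eqxx addr0.
by rewrite sqnormc_delta (negPf ki).
Qed.

Lemma Re_cdot_dmx_delta n (e : 'I_n -> R) i :
  Re (cdot (delta_mx i 0) (dmx e *m (delta_mx i 0 : 'cV[C]_n))) = e i.
Proof.
rewrite Re_cdot_dmx (bigD1 i) //= big1 => [|k ki].
  by rewrite sqnormc_delta eqxx mulr1 addr0.
by rewrite sqnormc_delta (negPf ki) mulr0.
Qed.

Lemma ctmx_tc m n (M : 'M[C]_(m, n)) : (M ^t*)%sesqui = ctmx M.
Proof. by rewrite /ctmx map_trmx. Qed.

Lemma hermitian_diagonalization n (A : 'M[C]_n) : is_hermitian A ->
  exists (V : 'M[C]_n) (d : 'I_n -> R), is_unitary V /\ A = V *m dmx d *m ctmx V.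
Proof.
move=> A_herm.
have A_hsym : A \is hermsymmx.
  by apply/is_hermitianmxP; rewrite expr0 scale1r ctmx_tc A_herm.
have /orthomx_spectralP A_eq := hermitian_normalmx A_hsym.
have P_unitary := spectral_unitarymx A.
have d_real := hermitian_spectral_diag_real A_hsym.
exists (ctmx (spectralmx A)), (fun i => Re (spectral_diag A 0 i)); split.
  by rewrite /is_unitary ctmxK -ctmx_tc; apply/unitarymxP.
rewrite ctmxK {1}A_eq (invmx_unitary P_unitary) ctmx_tc; congr (_ *m _ *m _).
apply/matrixP => i j; rewrite dmxE !mxE RRe_real //; exact: (mxOverP d_real).
Qed.

Lemma psd_dmx_ge0 n (V : 'M[C]_n) (d : 'I_n -> R) :
  is_unitary V -> is_psd (V *m dmx d *m ctmx V) -> forall i, 0 <= d i.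
Proof.
move=> V_unitary [_ psd] i; have := psd (V *m delta_mx i 0).
rewrite quadfE cdot_mulmxl !mulmxA V_unitary mul1mx -(mulmxA (dmx d)) V_unitary.
by rewrite mulmx1 lecE => /andP[_]; rewrite Re_cdot_dmx_delta.
Qed.

Lemma char_poly_unitary_dmx n (V : 'M[C]_n) (d : 'I_n -> R) : is_unitary V ->
  char_poly (V *m dmx d *m ctmx V) = \prod_i ('X - ((d i)%:C)%:P).
Proof.
move=> V_unitary; have [Vt_unit _] := mulmx1_unit V_unitary.
have VE : V = invmx (ctmx V).
  by rewrite -[X in X = _](mulKmx Vt_unit) V_unitary mulmx1.
rewrite {1}VE char_poly_similar // char_poly_trig ?diag_mx_is_trig //.
by apply: eq_bigr => i _; rewrite !mxE eqxx mulr1n.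
Qed.

Lemma card_roots_eq n (d e : 'I_n -> R) (p : {poly C}) (P : pred R) :
  p = \prod_i ('X - ((d i)%:C)%:P) -> p = \prod_i ('X - ((e i)%:C)%:P) ->
  #|[set i | P (d i)]| = #|[set i | P (e i)]|.
Proof.
move=> pd pe.
have card_sum (f : 'I_n -> R) :
    #|[set i | P (f i)]| = (\sum_(x <- [seq f i | i <- index_enum 'I_n] | P x) 1)%N.
  by rewrite big_map -sum1_card; apply: eq_bigl => i; rewrite inE.
rewrite !card_sum; apply: perm_big.
have /(perm_map Re) : perm_eq [seq (d i)%:C | i <- index_enum 'I_n]
                               [seq (e i)%:C | i <- index_enum 'I_n].
  by apply: prod_XsubC_eq; rewrite !big_map -pd -pe.
by rewrite -!map_comp.
Qed.

Lemma eigen_seq_card_le n (A : 'M[C]_n) (d : 'I_n -> R) (lam : nat -> R) r :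
  char_poly A = \prod_i ('X - ((d i)%:C)%:P) -> eigen_seq A lam ->
  (n - r <= #|[set i | (d i <= lam r)%R]|)%N.
Proof.
move=> A_d [A_lam [lam_mono _]].
have [rn | /ltnW] := leqP r n; last by rewrite -subn_eq0 => /eqP ->.
rewrite (card_roots_eq (fun x => x <= lam r) A_d A_lam).
have card_ge_r : #|~: [set i : 'I_n | (i < r)%N]| = (n - r)%N.
  by have := cardsC [set i : 'I_n | (i < r)%N]; rewrite card_ord card_ord_lt //; lia.
rewrite -card_ge_r; apply: subset_leq_card; apply/fintype.subsetP => i.
rewrite !inE -leqNgt => ri.
by apply: lam_mono; rewrite ri ltn_ord.
Qed.

Lemma psd_spectral n (A : 'M[C]_n) (lam : nat -> R) : is_psd A -> eigen_seq A lam ->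
  exists (V : 'M[C]_n) (d : 'I_n -> R),
    [/\ is_unitary V, A = V *m dmx d *m ctmx V, forall i, 0 <= d i
      & forall r, (n - r <= #|[set i | (d i <= lam r)%R]|)%N].
Proof.
move=> A_psd A_lam; have [V [d [V_unitary A_eq]]] := hermitian_diagonalization A_psd.1.
exists V, d; split => //; first by apply: (psd_dmx_ge0 V_unitary); rewrite -A_eq.
by move=> r; apply: eigen_seq_card_le A_lam; rewrite A_eq char_poly_unitary_dmx.
Qed.

Lemma eigen_seq_psd_ge0 n (A : 'M[C]_n) (lam : nat -> R) :
  is_psd A -> eigen_seq A lam -> forall j, 0 <= lam j.
Proof.
move=> A_psd A_lam j; have [V [d [_ _ d_ge0 card_d]]] := psd_spectral A_psd A_lam.
have [jn | nj] := ltnP j n; last by rewrite A_lam.2.2.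
have : (0 < #|[set i | (d i <= lam j)%R]|)%N.
  by apply: leq_trans (card_d j); rewrite subn_gt0.
by case/card_gt0P => i; rewrite inE; apply: le_trans.
Qed.

(** * Singular values *)

Lemma svd_mulmx_ct n (Q U W : 'M[C]_n) (s : 'I_n -> R) :
  is_svd Q U s W -> Q *m ctmx Q = U *m (dmx s *m dmx s) *m ctmx U.
Proof.
move=> [_ [W_unitary [_ [_ ->]]]].
rewrite !ctmxM ctmxK ctmx_dmx -/(dmx s) !mulmxA -(mulmxA _ (ctmx W)) W_unitary.
by rewrite mulmx1.
Qed.

Lemma hermitian_svd_sqr n (Q U W : 'M[C]_n) (s : 'I_n -> R) :
  is_hermitian Q -> is_svd Q U s W ->
  (ctmx U *m Q *m U) *m (ctmx U *m Q *m U) = dmx s *m dmx s.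
Proof.
move=> Q_herm svd; have [U_unitary _] := svd.
have QQ : Q *m Q = U *m (dmx s *m dmx s) *m ctmx U.
  by rewrite -{2}Q_herm; apply: svd_mulmx_ct svd.
rewrite -!mulmxA (mulmxA U) unitary_mulmxV // mul1mx (mulmxA Q) QQ.
by rewrite !mulmxA U_unitary mul1mx -mulmxA U_unitary mulmx1.
Qed.

Lemma sqnorm_svd_ge n (Q U W : 'M[C]_n) (s : 'I_n -> R) (a : 'cV[C]_n) t :
  is_hermitian Q -> is_svd Q U s W -> 0 <= t -> (forall j, a j 0 != 0 -> t <= s j) ->
  t ^+ 2 * sqnorm a <= sqnorm (Q *m (U *m a)).
Proof.
move=> Q_herm svd t_ge0 a_big; have [U_unitary [_ [s_ge0 _]]] := svd.
rewrite [sqnorm (Q *m _)]sqnormE cdot_mulmxl Q_herm mulmxA -{2}Q_herm (svd_mulmx_ct svd).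
rewrite cdot_mulmxl.
rewrite !mulmxA U_unitary mul1mx -(mulmxA _ (ctmx U)) U_unitary mulmx1 dmxM.
by apply: Re_cdot_dmx_ge => j aj; rewrite -expr2 ler_sqr ?nnegrE ?a_big.
Qed.

Lemma sqnorm_dmx_conj_le n (V : 'M[C]_n) (d : 'I_n -> R) (b : 'cV[C]_n) t :
  is_unitary V -> (forall j, 0 <= d j) -> (forall j, b j 0 != 0 -> d j <= t) ->
  sqnorm ((V *m dmx d *m ctmx V) *m (V *m b)) <= t ^+ 2 * sqnorm b.
Proof.
move=> V_unitary d_ge0 b_small.
rewrite -!mulmxA (mulmxA (ctmx V)) V_unitary mul1mx sqnorm_unitary //.
rewrite sqnormE cdot_mulmxl ctmx_dmx mulmxA dmxM; apply: Re_cdot_dmx_le => j bj.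
by rewrite -expr2 ler_sqr ?nnegrE ?b_small ?(le_trans (d_ge0 j) (b_small j bj)).
Qed.

Lemma row_unitary_trmx n (U : 'M[C]_n) : is_unitary U -> U^T *m ctmx U^T = 1%:M.
Proof.
move=> U_unitary; apply: trmx_inj; rewrite trmx_mul trmx1.
have -> : (ctmx U^T)^T = ctmx U by rewrite /ctmx map_trmx trmxK.
by rewrite trmxK.
Qed.

Lemma rowsub_row_unitary m n p (M : 'M[C]_(m, n)) (f : 'I_p -> 'I_m) :
  M *m ctmx M = 1%:M -> injective f -> rowsub f M *m ctmx (rowsub f M) = 1%:M.
Proof.
move=> M_unitary f_inj; apply/matrixP => k l.
move/matrixP: M_unitary => /(_ (f k) (f l)); rewrite !mxE (inj_eq f_inj) => <-.
by apply: eq_bigr => j _; rewrite !mxE.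
Qed.

Lemma row_unitary_rank p n (M : 'M[C]_(p, n)) : M *m ctmx M = 1%:M -> \rank M = p.
Proof. by move=> M_unitary; apply: mxrank_unitary; apply/unitarymxP; rewrite ctmx_tc. Qed.

Lemma unitary_span_meet n (A B : {set 'I_n}) (U V : 'M[C]_n) :
  is_unitary U -> is_unitary V -> (n < #|A| + #|B|)%N ->
  exists a b : 'cV[C]_n, [/\ U *m a = V *m b, a != 0,
    forall i, a i 0 != 0 -> i \in A & forall i, b i 0 != 0 -> i \in B].
Proof.
move=> U_unitary V_unitary card_AB.
have rank_rowsub (X : {set 'I_n}) (M : 'M[C]_n) : is_unitary M ->
    \rank (rowsub (enum_val : 'I_#|X| -> 'I_n) M^T) = #|X|.
  move=> M_unitary; apply: row_unitary_rank.
  exact: rowsub_row_unitary (row_unitary_trmx M_unitary) (@enum_val_inj _ _).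
have := @exists_nz_capmx _ _ _ _ (rowsub (enum_val : 'I_#|A| -> 'I_n) U^T)
                        (rowsub (enum_val : 'I_#|B| -> 'I_n) V^T).
rewrite !rank_rowsub // => /(_ card_AB) [v [v_neq0 /submxP[cA vA] /submxP[cB vB]]].
have coords (X : {set 'I_n}) (M : 'M[C]_n) (c : 'rV[C]_#|X|) :
    (c *m rowsub enum_val M^T)^T = M *m (c *m rowsub enum_val 1%:M)^T /\
    forall i, (c *m rowsub enum_val 1%:M)^T i 0 != 0 -> i \in X.
  split; first by rewrite -[M^T]mul1mx -mul_rowsub_mx mulmxA trmx_mul trmxK.
  move=> i; apply: contraR => iX; rewrite !mxE big1 // => k _.
  rewrite !mxE; case: eqP => [ki | _]; last by rewrite mulr0.
  by move: iX; rewrite -ki enum_valP.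
have [Ua a_supp] := coords A U cA; have [Vb b_supp] := coords B V cB.
exists (cA *m rowsub enum_val 1%:M)^T, (cB *m rowsub enum_val 1%:M)^T.
split => //; first by rewrite -Ua -Vb -vA -vB.
by apply: contraNneq v_neq0 => a0; rewrite -[v]trmxK vA Ua a0 mulmx0 trmx0.
Qed.

Lemma singular_value_le n (Qs H U W : 'M[C]_n) (s : 'I_n -> R) (lam : nat -> R) h r :
  is_psd Qs -> eigen_seq Qs lam -> is_hermitian H -> 0 <= h ->
  (forall x, sqnorm (H *m x) <= h ^+ 2 * sqnorm x) -> is_svd (Qs + H) U s W ->
  forall i : 'I_n, (r <= i)%N -> s i <= 2 * (lam r + h).
Proof.
move=> Qs_psd Qs_lam H_herm h_ge0 H_le svd i ri.
have [U_unitary [_ [s_ge0 [s_mono _]]]] := svd.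
have rn : (r < n)%N := leq_ltn_trans ri (ltn_ord i).
set sr := s (Ordinal rn).
suff sr_le : sr <= 2 * (lam r + h) by apply: le_trans sr_le; apply: s_mono.
have lam_ge0 := eigen_seq_psd_ge0 Qs_psd Qs_lam r.
have [V [d [V_unitary Qs_eq d_ge0 card_d]]] := psd_spectral Qs_psd Qs_lam.
have [|a [b [Ua_Vb a_neq0 a_supp b_supp]]] :=
  @unitary_span_meet _ [set j : 'I_n | (j < r.+1)%N] [set j | (d j <= lam r)%R]
    _ _ U_unitary V_unitary.
  by rewrite card_ord_lt // addSn ltnS -leq_subLR; apply: card_d.
have a_b : sqnorm a = sqnorm b.
  by rewrite -(sqnorm_unitary a U_unitary) Ua_Vb sqnorm_unitary.
have Q_herm : is_hermitian (Qs + H) by rewrite /is_hermitian ctmxD H_herm Qs_psd.1.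
have Q_ge : sr ^+ 2 * sqnorm a <= sqnorm ((Qs + H) *m (U *m a)).
  apply: (sqnorm_svd_ge Q_herm svd) => [|j /a_supp]; first exact: s_ge0.
  rewrite inE ltnS; exact: (s_mono j (Ordinal rn)).
have Qs_le : sqnorm (Qs *m (U *m a)) <= lam r ^+ 2 * sqnorm a.
  rewrite Ua_Vb a_b Qs_eq; apply: sqnorm_dmx_conj_le => // j /b_supp.
  by rewrite inE.
have H_le_a := H_le (U *m a); rewrite (sqnorm_unitary a U_unitary) in H_le_a.
have Q_le := sqnormD_le (Qs *m (U *m a)) (H *m (U *m a)); rewrite -mulmxDl in Q_le.
have a_gt0 : 0 < sqnorm a by rewrite lt_def sqnorm_eq0 a_neq0 sqnorm_ge0.
have : sr ^+ 2 * sqnorm a <= (2 * lam r ^+ 2 + 2 * h ^+ 2) * sqnorm a by lra.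
rewrite ler_pM2r // => sr2_le.
by have := s_ge0 (Ordinal rn); nra.
Qed.

(** * Spectral norm *)

Lemma vnormE n (x : 'cV[C]_n) : vnorm x = Num.sqrt (sqnorm x).
Proof. by []. Qed.

Lemma sqnorm0 n : sqnorm (0 : 'cV[C]_n) = 0.
Proof. by apply/eqP; rewrite sqnorm_eq0. Qed.

Lemma Re_cdot_le_entries n (G : 'M[C]_n) (x : 'cV[C]_n) : sqnorm x <= 1 ->
  `|Re (cdot x (G *m x))| <= \sum_i \sum_j Num.sqrt (sqnormc (G i j)).
Proof.
move=> x_le1; have entry_le1 i : Num.sqrt (sqnormc (x i 0)) <= 1.
  by rewrite -sqrtr1 ler_sqrt ?ler01 // (le_trans (sqnormc_le_sqnorm x i)).
rewrite cdotE raddf_sum (le_trans (ler_norm_sum _ _ _)) //.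
apply: ler_sum => i _; rewrite mxE mulr_sumr raddf_sum (le_trans (ler_norm_sum _ _ _)) //.
apply: ler_sum => j _; apply: le_trans (Re_le_sqrt_sqnormc _) _.
rewrite !sqnormcM sqnormcJ !sqrtrM ?mulr_ge0 ?sqnormc_ge0 //.
rewrite mulrCA -[leRHS]mulr1; apply: ler_wpM2l; first exact: sqrtr_ge0.
by rewrite mulr_ile1 ?sqrtr_ge0 ?entry_le1.
Qed.

Lemma specnorm_has_ubound n (H : 'M[C]_n) :
  has_ubound [set t : R | exists x : 'cV[C]_n, vnorm x = 1 /\ t = vnorm (H *m x)]%classic.
Proof.
exists (Num.sqrt (\sum_i \sum_j Num.sqrt (sqnormc ((ctmx H *m H) i j)))).
move=> _ [x [x1 ->]].
have x_le1 : sqnorm x <= 1 by rewrite -(sqr_sqrtr (sqnorm_ge0 x)) -vnormE x1 expr1n.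
rewrite vnormE ler_sqrt; last exact: le_trans (normr_ge0 _) (Re_cdot_le_entries _ x_le1).
by rewrite sqnormE cdot_mulmxl mulmxA (le_trans (ler_norm _)) ?Re_cdot_le_entries.
Qed.

Lemma specnorm_ge0 n (H : 'M[C]_n) : 0 <= specnorm H.
Proof.
case: n H => [|n] H.
  rewrite /specnorm (_ : [set _ | _]%classic = set0) ?sup0 //.
  apply/seteqP; split => // t [x [+ _]].
  by rewrite vnormE /sqnorm big_ord0 sqrtr0 => /eqP; rewrite eq_sym oner_eq0.
pose e0 : 'cV[C]_n.+1 := delta_mx 0 0.
have He0 : [set t : R | exists x, vnorm x = 1 /\ t = vnorm (H *m x)]%classic
              (vnorm (H *m e0)).
  by exists e0; rewrite vnormE sqnorm_delta sqrtr1.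
exact: le_trans (sqrtr_ge0 _) (ub_le_sup (specnorm_has_ubound H) He0).
Qed.

Lemma sqnorm_mulmx_le n (H : 'M[C]_n) (x : 'cV[C]_n) :
  sqnorm (H *m x) <= specnorm H ^+ 2 * sqnorm x.
Proof.
have [x0 | x_neq0] := eqVneq x 0; first by rewrite x0 mulmx0 sqnorm0 mulr0.
have x_gt0 : 0 < sqnorm x by rewrite lt_def sqnorm_eq0 x_neq0 sqnorm_ge0.
pose k := (Num.sqrt (sqnorm x))^-1.
have k2x : k ^+ 2 * sqnorm x = 1 by rewrite exprVn sqr_sqrtr ?mulVf ?sqnorm_ge0 ?gt_eqF.
have : vnorm (H *m (k%:C *: x)) <= specnorm H.
  apply: (ub_le_sup (specnorm_has_ubound H)).
  by exists (k%:C *: x); rewrite vnormE sqnormZ k2x sqrtr1.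
rewrite vnormE -scalemxAr sqnormZ -(ler_sqr (sqrtr_ge0 _) (specnorm_ge0 H)).
rewrite sqr_sqrtr => [Hx_le |]; last by rewrite mulr_ge0 ?sqr_ge0 ?sqnorm_ge0.
by rewrite -[sqnorm (H *m x)]mul1r -k2x mulrAC ler_wpM2r ?sqnorm_ge0.
Qed.

(** * The truncation gap *)

Lemma Re_le (x y : C) : x <= y -> Re x <= Re y.
Proof. by rewrite lecE => /andP[]. Qed.

Lemma normc_real (x : R) : `|x%:C| = `|x|%:C.
Proof. by rewrite normc_def /= expr0n addr0 sqrtr_sqr. Qed.

Lemma sqnorm_AK K n (z : 'cV[C]_n) : inAKn K z -> sqnorm z = n%:R.
Proof.
move=> z_AK; rewrite /sqnorm (eq_bigr (fun=> 1)) ?sumr_const ?card_ord // => i _.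
by have [k ->] := z_AK i; rewrite /sqnormc /= cos2Dsin2.
Qed.

Lemma trunc_svdE n (U : 'M[C]_n) (s : 'I_n -> R) r :
  trunc_svd U s r = U *m dmx (fun i => if (i < r)%N then s i else 0) *m ctmx U.
Proof.
apply/matrixP => k l; rewrite /trunc_svd summxE [RHS]mxE.
rewrite [RHS](bigID (fun i : 'I_n => (i < r)%N)) /= [X in _ = _ + X]big1 ?addr0.
  apply: eq_bigr => i ir; rewrite mul_mx_dmx ir [LHS]mxE [X in _ * X = _]mxE big_ord1.
  by rewrite !mxE mulrCA mulrA.
by move=> i ir; rewrite mul_mx_dmx (negbTE ir) mulr0 mul0r.
Qed.

Lemma Re_cdot_dmx_trunc n (s : 'I_n -> R) r b (a : 'cV[C]_n) :
  (forall i, 0 <= s i) -> 0 <= b -> (forall i : 'I_n, (r <= i)%N -> s i <= b) ->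
  0 <= Re (cdot a (dmx s *m a))
       - Re (cdot a (dmx (fun i => if (i < r)%N then s i else 0) *m a)) <= b * sqnorm a.
Proof.
move=> s_ge0 b_ge0 s_tail; rewrite -raddfB -cdotBr -mulmxBl dmxB; apply/andP; split.
  rewrite -[X in X <= _](mul0r (sqnorm a)); apply: Re_cdot_dmx_ge => i _.
  by case: ifP => _; rewrite ?subrr ?subr0 ?s_ge0.
apply: Re_cdot_dmx_le => i _; case: ifPn => [_ | ir]; rewrite ?subrr ?subr0 //.
by apply: s_tail; rewrite leqNgt.
Qed.

Lemma Re_cdot_psd_add_ge n (A H : 'M[C]_n) h (x : 'cV[C]_n) :
  is_psd A -> 0 <= h -> sqnorm (H *m x) <= h ^+ 2 * sqnorm x ->
  - h * sqnorm x <= Re (cdot x ((A + H) *m x)).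
Proof.
move=> [_ A_psd] h_ge0 Hx; rewrite mulmxDl cdotDr raddfD /=.
have := Re_le (A_psd x); rewrite quadfE /= => A_ge0.
by have := Re_cdot_le h_ge0 Hx; rewrite ler_norml => /andP[H_ge _]; lra.
Qed.

Lemma quadf_trunc_svd_gap n r (Qs H U W : 'M[C]_n) (s : 'I_n -> R) (lam : nat -> R) h
    (z : 'cV[C]_n) :
  is_psd Qs -> eigen_seq Qs lam -> is_hermitian H -> 0 <= h ->
  (forall x, sqnorm (H *m x) <= h ^+ 2 * sqnorm x) -> is_svd (Qs + H) U s W ->
  - (3 * h * sqnorm z) <= Re (quadf Qs z) - Re (quadf (trunc_svd U s r) z)
    <= (2 * lam r + 5 * h) * sqnorm z.
Proof.
move=> Qs_psd Qs_lam H_herm h_ge0 H_le svd.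
have [U_unitary [_ [s_ge0 _]]] := svd.
have Q_herm : is_hermitian (Qs + H) by rewrite /is_hermitian ctmxD H_herm Qs_psd.1.
set T := ctmx U *m (Qs + H) *m U.
have T_herm : ctmx T = T by rewrite /T !ctmxM ctmxK Q_herm mulmxA.
have T_ge w : - h * sqnorm w <= Re (cdot w (T *m w)).
  rewrite -(sqnorm_unitary w U_unitary) /T -!mulmxA -cdot_mulmxl.
  exact: Re_cdot_psd_add_ge.
set a := ctmx U *m z.
have z_eq : z = U *m a by rewrite /a mulmxA unitary_mulmxV // mul1mx.
have a_z : sqnorm a = sqnorm z by rewrite /a sqnorm_unitaryV.
have Qs_z : Re (quadf Qs z) = Re (cdot a (dmx s *m a))
                              - Re (cdot a ((dmx s - T) *m a)) - Re (cdot z (H *m z)).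
  have -> : Qs = (Qs + H) - H by rewrite addrK.
  rewrite quadfE mulmxBl cdotBr raddfB /=; congr (_ - _).
  rewrite {1 2}z_eq cdot_mulmxl mulmxBl cdotBr raddfB /= opprB addrCA subrr addr0.
  by rewrite /T !mulmxA.
have Qr_z : Re (quadf (trunc_svd U s r) z)
            = Re (cdot a (dmx (fun i => if (i < r)%N then s i else 0) *m a)).
  rewrite quadfE trunc_svdE [in LHS]z_eq cdot_mulmxl !mulmxA U_unitary mul1mx.
  by rewrite -(mulmxA _ (ctmx U) U) U_unitary mulmx1.
have lam_ge0 := eigen_seq_psd_ge0 Qs_psd Qs_lam r.
have tail := singular_value_le Qs_psd Qs_lam H_herm h_ge0 H_le svd (r := r).
have /andP[D_lo D_hi] := Re_cdot_dmx_trunc a s_ge0 (ltac:(lra) : 0 <= 2 * (lam r + h)) tail.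
have := Re_cdot_sqrt_dmx_gap s_ge0 (hermitian_svd_sqr Q_herm svd) h_ge0 T_herm T_ge a.
have := Re_cdot_le h_ge0 (H_le z).
rewrite Qs_z Qr_z a_z in D_hi * => /[!ler_norml] /andP[Hz_lo Hz_hi] /andP[G_lo G_hi].
by apply/andP; split; lra.
Qed.

End HermitianForms.

Theorem corollary5 (R : realType) :
  exists c : R, 0 < c /\
  forall (n K r : nat) (Qs H : 'M[R[i]]_n) (lam : nat -> R)
         (U W : 'M[R[i]]_n) (s : 'I_n -> R) (zopt zr : 'cV[R[i]]_n),
    (2 <= K)%N ->
    is_psd Qs ->
    is_hermitian H ->
    eigen_seq Qs lam ->
    (r <= \rank Qs)%N ->
    is_svd (Qs + H) U s W ->
    inAKn K zopt -> (forall z, inAKn K z -> quadf Qs z <= quadf Qs zopt) ->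
    inAKn K zr ->
    (forall z, inAKn K z -> quadf (trunc_svd U s r) z <= quadf (trunc_svd U s r) zr) ->
    `| quadf Qs zopt - quadf Qs zr | <= (c * n%:R * (lam r + specnorm H))%:C.
Proof.
exists 10; split => [|n K r Qs H lam U W s zopt zr _ Qs_psd H_herm Qs_lam _ svd]; first lra.
move=> zopt_AK zopt_max zr_AK zr_max.
have h_ge0 := specnorm_ge0 H.
have lam_ge0 := eigen_seq_psd_ge0 Qs_psd Qs_lam r.
have gap z := quadf_trunc_svd_gap r z Qs_psd Qs_lam H_herm h_ge0
  (sqnorm_mulmx_le H) svd.
have /andP[_ opt_hi] := gap zopt; have /andP[r_lo _] := gap zr.
rewrite (sqnorm_AK zopt_AK) in opt_hi; rewrite (sqnorm_AK zr_AK) in r_lo.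
have opt_ge := Re_le (zopt_max zr zr_AK); have trunc_ge := Re_le (zr_max zopt zopt_AK).
rewrite (quadf_hermitian zopt Qs_psd.1) (quadf_hermitian zr Qs_psd.1) -rmorphB /=.
rewrite normc_real lecR ger0_norm; last lra.
by have : 0 <= n%:R :> R := ler0n _ n; nra.
Qed.
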